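(* For every integer $a \ge 2$ and every $b \in \mathbb{N}$, $R_\mathrm{cyc}(C_a^\mathrm{mon}, P_b^\mathrm{mon}) = 1 + (a-1)(b-1)$.
   Context: All graphs are finite, simple and undirected, and a graph of order $n$ has vertex set $\{0,1,\ldots,n-1\}$; $K_n$ is the complete graph on $\{0,\ldots,n-1\}$. A $2$-edge-coloring of $K_n$ assigns each edge a color in $\{1,2\}$. For a graph $H$ and such a coloring, an embedding of $H$ in color $j$ is an injective map $\varphi\colon V(H)\to V(K_n)$ such that for every edge $uv$ of $H$ the edge $\{\varphi(u),\varphi(v)\}$ has color $j$; it is increasing up to a cyclic permutation if there exists $t\in V(H)$ such that $(\varphi(t),\ldots,\varphi(|H|-1),\varphi(0),\ldots,\varphi(t-1))$ is increasing. The cyclic Ramsey number $R_\mathrm{cyc}(H_1,H_2)$ is the smallest $n$ such that every $2$-edge-coloring of $K_n$ admits an embedding of $H_1$ in color $1$ or of $H_2$ in color $2$ that is increasing up to a cyclic permutation. The monotone path $P_n^\mathrm{mon}$ has edges $\{i,i+1\}$, $0\le i\le n-2$. For $n\ge3$ the monotone cycle $C_n^\mathrm{mon}$ is $P_n^\mathrm{mon}$ plus the edge $\{0,n-1\}$; by convention $C_2^\mathrm{mon}=K_2$. *)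

From mathcomp Require Import all_boot.
Unset Printing Implicit Defensive.

Record graph := Graph { gorder : nat; gadj : rel (ordinal gorder) }.
Arguments Graph : clear implicits.

Definition two_coloring (n : nat) (c : 'I_n -> 'I_n -> nat) : Prop :=
  (forall i j, c i j = c j i) /\
  (forall i j, i != j -> c i j = 1 \/ c i j = 2).

Definition embedding (H : graph) (n : nat) (c : 'I_n -> 'I_n -> nat)
    (j : nat) (phi : 'I_(gorder H) -> 'I_n) : Prop :=
  injective phi /\ (forall u v, gadj H u v -> c (phi u) (phi v) = j).

Definition cyc_increasing (h n : nat) (phi : 'I_h -> 'I_n) : Prop :=
  exists t : 'I_h,
    sorted ltn [seq nat_of_ord (phi i) | i <- rot t (enum 'I_h)].

Definition cyc_ramsey_prop (H1 H2 : graph) (n : nat) : Prop :=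
  forall c : 'I_n -> 'I_n -> nat, two_coloring n c ->
    (exists phi, embedding H1 n c 1 phi /\ cyc_increasing (gorder H1) n phi) \/
    (exists phi, embedding H2 n c 2 phi /\ cyc_increasing (gorder H2) n phi).

Definition is_Rcyc (H1 H2 : graph) (N : nat) : Prop :=
  cyc_ramsey_prop H1 H2 N /\ (forall m, m < N -> ~ cyc_ramsey_prop H1 H2 m).

Definition mon_path (n : nat) : graph :=
  @Graph n (fun i j : 'I_n => (i.+1 == j :> nat) || (j.+1 == i :> nat)).

Definition mon_cycle (n : nat) : graph :=
  @Graph n (fun i j : 'I_n =>
    if n == 2 then i != j
    else [|| (i.+1 == j :> nat), (j.+1 == i :> nat),
             (i == 0 :> nat) && (j == n.-1 :> nat)
           | (j == 0 :> nat) && (i == n.-1 :> nat)]).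

From mathcomp Require Import all_boot zify.

(* Upper bound: label each vertex v by the number h(v) of edges of a longest
   increasing colour-2 path starting at v.  If some h(v) >= b - 1 this path is
   the monotone P_b.  Otherwise the labels take at most b - 1 values on
   1 + (a - 1)(b - 1) vertices, so some label class has a vertices; a colour-2
   edge strictly decreases the label, so the class is a colour-1 clique, and its
   first a vertices in increasing order carry C_a.
   Lower bound: on (a - 1)(b - 1) vertices, colour 2 inside the consecutive
   blocks of size b - 1 and 1 across them.  A colour-2 path stays in one block,
   so has at most b - 1 vertices.  A cyclically increasing colour-1 cycle, read
   from its smallest vertex, enters a strictly later block at every step, so it
   would need a blocks. *)

Set Implicit Arguments.
Unset Strict Implicit.

Lemma pigeonhole_fibers (T : finType) (f : T -> nat) (K A : nat) :
  (forall x, f x < K) -> K * A < #|T| -> exists k, A < #|[set x | f x == k]|.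
Proof.
move=> f_lt_K card_T.
have [/existsP[k big_k] | /existsPn small] :=
  boolP [exists k : 'I_K, A < #|[set x | f x == k]|]; first by exists (val k).
suff : #|T| <= K * A by rewrite leqNgt card_T.
rewrite -sum1_card (partition_big (fun x => Ordinal (f_lt_K x)) predT) //=.
rewrite -[K in K * A]card_ord -sum_nat_const; apply: leq_sum => k _.
rewrite sum1dep_card; move: (small k); rewrite -leqNgt; apply: leq_trans.
by apply/eq_leq/eq_card => x; rewrite !inE.
Qed.

Section Height.
Variables (n : nat) (e : rel 'I_n).

Fixpoint height_upto k v :=
  if k is k'.+1 then \max_(u | e v u) (height_upto k' u).+1 else 0.

Lemma height_upto_path k v : exists2 p, size p = height_upto k v & path e v p.
Proof.
elim: k v => [|k IH] v /=; first by exists [::].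
have [u0 e_vu0 | no_succ] := pickP (e v); last by rewrite big_pred0 //; exists [::].
have [|u e_vu ->] := @eq_bigmax_cond _ (e v) (fun u => (height_upto k u).+1).
  by apply/card_gt0P; exists u0.
rewrite unfold_in in e_vu.
by have [p <- e_p] := IH u; exists (u :: p); rewrite //= e_vu.
Qed.

Hypothesis e_up : forall u v, e u v -> u < v.

Lemma height_upto_stable k1 k2 (v : 'I_n) :
  n - v <= k1 -> n - v <= k2 -> height_upto k1 v = height_upto k2 v.
Proof.
elim: k1 k2 v => [|k1 IH] [|k2] v /=; have := ltn_ord v; try lia.
move=> _ le1 le2; apply: eq_bigr => u /e_up lt_vu; congr _.+1; apply: IH; lia.
Qed.

(* Any fuel above [n - v] would do; [n.+1] is a successor, so [heightE] unfolds it. *)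
Definition height v := height_upto n.+1 v.

Lemma heightE v : height v = \max_(u | e v u) (height u).+1.
Proof.
apply: eq_bigr => u _; congr _.+1; apply: height_upto_stable; have := ltn_ord u; lia.
Qed.

Lemma height_lt u v : e v u -> height u < height v.
Proof. by move=> e_vu; rewrite [height v]heightE (leq_bigmax_cond _ e_vu). Qed.

Lemma height_path L v : L <= height v -> exists2 p, size p = L & path e v p.
Proof.
have [p size_p e_p] := height_upto_path n.+1 v.
by move=> le_L; exists (take L p); rewrite ?size_takel ?size_p // take_path.
Qed.

End Height.

Lemma sorted_ltn_uniq n (s : seq 'I_n) : sorted ltn (map val s) -> uniq s.
Proof. by move/(sorted_uniq ltn_trans ltnn); rewrite (map_inj_uniq val_inj). Qed.

Lemma sorted_ltn_enum n (S : {set 'I_n}) : sorted ltn (map val (enum S)).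
Proof.
rewrite sorted_map /enum_mem -enumT; apply: sorted_filter; first exact: ltn_trans.
by rewrite -sorted_map val_enum_ord iota_ltn_sorted.
Qed.

Lemma embedding_of_sorted (H : graph) n c j (s : seq 'I_n) x0 :
  0 < gorder H -> size s = gorder H -> sorted ltn (map val s) ->
  (forall u v, gadj H u v -> c (nth x0 s u) (nth x0 s v) = j) ->
  exists phi, embedding H n c j phi /\ cyc_increasing (gorder H) n phi.
Proof.
move=> H_gt0 size_s s_sorted s_adj; exists (fun i => nth x0 s i); split=> //.
  split=> // u v /eqP; rewrite nth_uniq ?size_s ?sorted_ltn_uniq //.
  by move/eqP/val_inj.
exists (Ordinal H_gt0); rewrite rot0.
suff -> : [seq val (nth x0 s i) | i : 'I_(gorder H) <- enum 'I_(gorder H)] = map val s by [].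
by rewrite -[in RHS](mkseq_nth x0 s) size_s /mkseq -val_enum_ord -!map_comp.
Qed.

Lemma path_embedding n c j (v : 'I_n) p :
  (forall x y, c x y = c y x) ->
  path (fun x y : 'I_n => (x < y) && (c x y == j)) v p ->
  exists phi, embedding (mon_path (size p).+1) n c j phi /\
              cyc_increasing (size p).+1 n phi.
Proof.
move=> c_sym v_p; apply: (@embedding_of_sorted _ _ _ _ (v :: p) v) => //=.
  by rewrite path_map; apply: sub_path v_p => x y /andP[].
have step i : i < size p -> c (nth v (v :: p) i) (nth v (v :: p) i.+1) = j.
  by move/(pathP v v_p)/andP => [_ /eqP].
move=> u w /orP[] /eqP w_u; first by rewrite -w_u step // -ltnS w_u.
by rewrite c_sym -w_u step // -ltnS w_u.
Qed.

Lemma clique_embedding (H : graph) n c j (S : {set 'I_n}) :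
  irreflexive (gadj H) -> 0 < gorder H <= #|S| ->
  {in S &, forall x y, x != y -> c x y = j} ->
  exists phi, embedding H n c j phi /\ cyc_increasing (gorder H) n phi.
Proof.
move=> H_irr /andP[H_gt0 H_le_S] S_clique.
have [x0 _] : exists x0, x0 \in S by apply/card_gt0P; apply: leq_trans H_le_S.
set s := take (gorder H) (enum S).
have size_s : size s = gorder H by rewrite size_takel // -cardE.
have s_sorted : sorted ltn (map val s) by rewrite map_take take_sorted ?sorted_ltn_enum.
have s_S (i : 'I_(gorder H)) : nth x0 s i \in S.
  by rewrite -mem_enum; apply: mem_take (mem_nth _ _); rewrite size_s.
apply: (@embedding_of_sorted _ _ _ _ s x0) => // u v adj_uv; apply: S_clique => //.
rewrite nth_uniq ?size_s ?sorted_ltn_uniq //.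
by apply: contraTneq adj_uv => /val_inj ->; rewrite H_irr.
Qed.

Lemma mon_cycle_irrefl a : 2 <= a -> irreflexive (gadj (mon_cycle a)).
Proof.
by move=> a_ge2 u /=; case: ifP => [_|/eqP]; [rewrite eqxx | have := ltn_ord u; lia].
Qed.

Lemma ramsey_upper a b : 2 <= a -> 1 <= b ->
  cyc_ramsey_prop (mon_cycle a) (mon_path b) (1 + (a - 1) * (b - 1)).
Proof.
move=> a_ge2 b_gt0 c [c_sym c_col].
pose e (x y : 'I_(1 + (a - 1) * (b - 1))) := (x < y) && (c x y == 2).
have e_up x y : e x y -> x < y by case/andP.
have [/existsP[v long] | /existsPn short] := boolP [exists v, b.-1 <= height e v].
  right; have [p size_p v_p] := height_path long.
  by have := path_embedding c_sym v_p; rewrite size_p prednK.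
left; have height_lt_b x : height e x < b.-1 by rewrite ltnNge short.
have many_vertices : b.-1 * a.-1 < #|'I_(1 + (a - 1) * (b - 1))|.
  by rewrite card_ord; lia.
have [k big_k] := pigeonhole_fibers height_lt_b many_vertices.
apply: (clique_embedding (S := [set x | height e x == k])) => [|/=|x y].
- exact: mon_cycle_irrefl.
- by rewrite (ltnW a_ge2) (leq_trans (leqSpred a) big_k).
rewrite !inE => /eqP hx /eqP hy x_neq_y; case: (c_col x y x_neq_y) => // c2.
have : e x y || e y x by rewrite /e (c_sym y x) c2 eqxx !andbT -neq_ltn.
by case/orP => /(height_lt e_up); lia.
Qed.

Lemma path_iota_succ m k : path (fun x y => x.+1 == y) m (iota m.+1 k).
Proof. by elim: k m => //= k IH m; rewrite eqxx IH. Qed.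

Lemma cycle_iota_succ_mod a :
  cycle (fun x y => (x.+1 == y) || (x == a.-1) && (y == 0)) (iota 0 a).
Proof.
case: a => //= a; rewrite rcons_path; apply/andP; split.
  by apply: sub_path (path_iota_succ 0 a) => x y ->.
by case: a => // a; rewrite -[a.+1]addn1 iotaD last_cat /= add1n addn1 !eqxx.
Qed.

Lemma mon_cycle_cycle a : 2 <= a -> cycle (gadj (mon_cycle a)) (enum 'I_a).
Proof.
move=> a_ge2; set next_mod := fun x y => (x.+1 == y) || (x == a.-1) && (y == 0).
have adj_next (u w : 'I_a) : next_mod u w -> gadj (mon_cycle a) u w.
  rewrite /next_mod /=; have := ltn_ord u; have := ltn_ord w.
  case: (a =P 2) => [_ _ _ next_uw|]; last lia.
  by apply/eqP => u_w; move: next_uw; rewrite u_w; lia.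
apply: (sub_cycle (e := relpre val next_mod) adj_next).
by rewrite -cycle_map val_enum_ord cycle_iota_succ_mod.
Qed.

Definition block_coloring (d : nat) {m : nat} (i j : 'I_m) : nat :=
  if i %/ d == j %/ d then 2 else 1.

Lemma block_coloring_two d m : two_coloring m (block_coloring d).
Proof.
split=> [i j | i j _]; rewrite /block_coloring; first by rewrite eq_sym.
by case: ifP; [right | left].
Qed.

Lemma block_path_le d m b phi : 0 < d ->
  embedding (mon_path b) m (block_coloring d) 2 phi -> b <= d.
Proof.
move=> d_gt0 [phi_inj phi_adj].
case: b => // b in phi phi_inj phi_adj *.
have step k : k < b -> phi (inord k) %/ d = phi (inord k.+1) %/ d.
  move=> lt_kb; have := phi_adj (inord k) (inord k.+1).
  rewrite /= /block_coloring !inordK ?eqxx ?ltnS ?(ltnW lt_kb) //.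
  by case: ifP => [/eqP | _ /(_ isT)].
have block0 k : k <= b -> phi (inord k) %/ d = phi (inord 0) %/ d.
  by elim: k => // k IH lt_kb; rewrite -step // IH // ltnW.
have same_block (i j : 'I_b.+1) : phi i %/ d = phi j %/ d.
  by rewrite -(inord_val i) -(inord_val j) !block0 // -ltnS.
pose psi i := Ordinal (ltn_pmod (phi i) d_gt0).
have psi_inj : injective psi.
  move=> i j /(congr1 val) /= mod_ij; apply/phi_inj/val_inj => /=.
  by rewrite (divn_eq (phi i) d) (divn_eq (phi j) d) mod_ij (same_block i j).
by have := leq_card psi psi_inj; rewrite !card_ord.
Qed.

Lemma leq_size_last_divn d x s :
  path ltn x s -> path (fun y z => y %/ d != z %/ d) x s ->
  x %/ d + size s <= last x s %/ d.
Proof.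
elim: s x => [|y s IH] x /=; first by rewrite addn0.
move=> /andP[lt_xy lt_s] /andP[neq_xy neq_s]; have := IH y lt_s neq_s.
by have := leq_div2r d (ltnW lt_xy); move: neq_xy; lia.
Qed.

Lemma block_no_cycle d m a phi : 2 <= a -> m <= (a - 1) * d ->
  embedding (mon_cycle a) m (block_coloring d) 1 phi -> ~ cyc_increasing a m phi.
Proof.
move=> a_ge2 m_le [_ phi_adj] [t incr].
set q := [seq nat_of_ord (phi i) | i <- enum 'I_a].
have q_cycle : cycle (fun y z => y %/ d != z %/ d) (rot t q).
  rewrite rot_cycle cycle_map; apply: sub_cycle (mon_cycle_cycle a_ge2) => u w.
  by move/phi_adj; rewrite /block_coloring /=; case: ifP.
have q_lt_m (y : nat) : y \in rot t q -> y < m.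
  by rewrite mem_rot => /mapP[i _ ->]; apply: ltn_ord.
have size_q : size (rot t q) = a by rewrite size_rot size_map size_enum_ord.
rewrite map_rot -/q in incr.
case: (rot t q) q_cycle incr q_lt_m size_q => [|x s] q_cycle incr q_lt_m /= size_s.
  by rewrite -size_s in a_ge2.
move: q_cycle; rewrite /= rcons_path => /andP[neq_s _].
have last_lt_m := q_lt_m _ (mem_last x s).
have d_gt0 : 0 < d by move: m_le; lia.
have last_block : last x s %/ d < a - 1 by rewrite ltn_divLR // (leq_trans last_lt_m m_le).
move: (leq_size_last_divn incr neq_s) last_block; move: (x %/ d) (last x s %/ d); lia.
Qed.

Lemma ramsey_lower a b m : 2 <= a -> 1 <= b -> m <= (a - 1) * (b - 1) ->
  ~ cyc_ramsey_prop (mon_cycle a) (mon_path b) m.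
Proof.
move=> a_ge2 b_gt0 m_le ramsey.
have [[phi [phi_emb phi_incr]] | [phi [phi_emb _]]] :=
  ramsey _ (block_coloring_two (b - 1) m).
  exact: block_no_cycle phi_emb phi_incr.
have m_gt0 : 0 < m by have := ltn_ord (phi (Ordinal b_gt0)); lia.
have d_gt0 : 0 < b - 1 by move: m_le; case: (b - 1) => //; rewrite muln0; lia.
by have := block_path_le d_gt0 phi_emb; lia.
Qed.

Theorem theorem4p12 (a b : nat) :
  2 <= a -> 1 <= b ->
  is_Rcyc (mon_cycle a) (mon_path b) (1 + (a - 1) * (b - 1)).
Proof.
move=> a_ge2 b_gt0; split; first exact: ramsey_upper.
by move=> m; rewrite add1n ltnS; apply: ramsey_lower.
Qed.
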